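(* Let $\Lambda$ be a row-finite $k$-graph with no sources. (1) If $\Lambda$ is strongly connected then $\Lambda$ is cofinal. (2) If $\Lambda$ is cofinal, has no sinks and $\Lambda^0$ is finite, then $\Lambda$ is strongly connected.
   Context: A $k$-graph is a countable category $\Lambda$ with a functor $d:\Lambda\to\mathbb{N}^k$ with unique factorisation; $\Lambda^n=d^{-1}(n)$, $\Lambda^0$ = vertices, $uXv=\{\lambda\in X:r(\lambda)=u,s(\lambda)=v\}$. Row-finite: $v\Lambda^n$ finite; no sources: $v\Lambda^n\ne\emptyset$ for $n\ne0$; no sinks: $\Lambda^nv\ne\emptyset$ for $n\ne0$. For $N\in\mathbb{N}^k$, $N>0$ means $N_i>0$ for all $i$. $\Lambda$ is strongly connected if for all $u,v\in\Lambda^0$ there is $N>0$ with $u\Lambda^Nv\ne\emptyset$. $\Lambda$ is cofinal if for all $v,w\in\Lambda^0$ there is $N\in\mathbb{N}^k$ such that $v\Lambda s(\alpha)\ne\emptyset$ for every $\alpha\in w\Lambda^N$. *)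

From Stdlib Require Import List.
From mathcomp Require Import all_boot.
Set Implicit Arguments. Unset Strict Implicit. Unset Printing Implicit Defensive.

(* Elements of N^k are functions 'I_k -> nat, compared pointwise. *)
Definition degk (k : nat) := 'I_k -> nat.

(* A k-graph: a countable category (objects [vtx], morphisms [mor], range [r],
   source [s], identities [idm], composition [comp lam mu] = lam mu, defined
   (meaningfully) when s lam = r mu) with a degree functor d : mor -> N^k
   having the unique factorisation property. *)
Record kgraph (k : nat) := KGraph {
  vtx : Type;
  mor : Type;
  r : mor -> vtx;
  s : mor -> vtx;
  idm : vtx -> mor;
  comp : mor -> mor -> mor;
  d : mor -> degk k;
  vtx_countable : exists f : vtx -> nat, injective f;
  mor_countable : exists f : mor -> nat, injective f;
  r_idm : forall v, r (idm v) = v;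
  s_idm : forall v, s (idm v) = v;
  r_comp : forall l m, s l = r m -> r (comp l m) = r l;
  s_comp : forall l m, s l = r m -> s (comp l m) = s m;
  comp_idl : forall l, comp (idm (r l)) l = l;
  comp_idr : forall l, comp l (idm (s l)) = l;
  compA : forall l m n, s l = r m -> s m = r n ->
      comp l (comp m n) = comp (comp l m) n;
  d_idm : forall v i, d (idm v) i = 0;
  d_comp : forall l m, s l = r m -> forall i, d (comp l m) i = d l i + d m i;
  factorisation : forall l (m n : degk k), (forall i, d l i = m i + n i) ->
      exists mu nu, [/\ s mu = r nu, (forall i, d mu i = m i),
                        (forall i, d nu i = n i) & comp mu nu = l];
  factorisation_uniq : forall mu nu mu' nu',
      s mu = r nu -> s mu' = r nu' ->
      (forall i, d mu i = d mu' i) -> (forall i, d nu i = d nu' i) ->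
      comp mu nu = comp mu' nu' -> mu = mu' /\ nu = nu'
}.

Section KGraphProps.
Variables (k : nat) (L : kgraph k).

Definition has_degree (l : mor L) (n : degk k) := forall i, d l i = n i.
Definition deg_zero (n : degk k) := forall i, n i = 0.
Definition deg_pos (n : degk k) := forall i, 0 < n i.

Definition row_finite :=
  forall (v : vtx L) (n : degk k), exists sq : seq (mor L),
    forall l, r l = v -> has_degree l n -> List.In l sq.

Definition no_sources :=
  forall (v : vtx L) (n : degk k), ~ deg_zero n ->
    exists l, r l = v /\ has_degree l n.

Definition no_sinks :=
  forall (v : vtx L) (n : degk k), ~ deg_zero n ->
    exists l, s l = v /\ has_degree l n.

Definition finite_vertices := exists sq : seq (vtx L), forall v, List.In v sq.

Definition strongly_connected :=
  forall u v : vtx L, exists N : degk k, deg_pos N /\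
    exists l, [/\ r l = u, s l = v & has_degree l N].

Definition cofinal :=
  forall v w : vtx L, exists N : degk k,
    forall alpha, r alpha = w -> has_degree alpha N ->
      exists l, r l = v /\ s l = s alpha.

End KGraphProps.

(* Strong connectivity gives a path from any vertex to the source of any path,
   so any degree witnesses cofinality.  Conversely, with finitely many vertices
   the cofinality degrees are bounded by a single B.  To connect u to v, take a
   path beta ending at v of degree strictly above B (no sinks), split off its
   initial segment mu of the cofinality degree of r(beta), and use cofinality to
   reach s(mu) from u; followed by the rest of beta this gives a path from u to
   v of strictly positive degree. *)
From Pilot Require Import Defs.
From mathcomp Require Import all_boot.
From Stdlib Require Import Lia.
From mathcomp Require Import zify.

Set Implicit Arguments.
Unset Strict Implicit.

Lemma exists_bound_seq (k : nat) (T : Type) (P : T -> degk k -> Prop) :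
  (forall w, exists N, P w N) -> forall sq : seq T,
  exists B : degk k, forall w, List.In w sq ->
    exists N, P w N /\ forall i, N i <= B i.
Proof.
move=> exP; elim=> [|a sq [B HB]]; first by exists (fun _ => 0).
have [Na PNa] := exP a.
exists (fun i => Na i + B i) => w [<-|w_sq].
  by exists Na; split=> // i; apply: leq_addr.
have [N [PN leNB]] := HB w w_sq.
by exists N; split=> // i; apply: leq_trans (leNB i) (leq_addl _ _).
Qed.

Section KGraphPaths.
Variables (k : nat) (L : kgraph k).

Lemma factorisation_prefix (l : mor L) (N : degk k) :
  (forall i, N i <= d l i) ->
  exists mu nu, [/\ s mu = r nu, r mu = r l, s nu = s l,
                    has_degree mu N & forall i, d nu i = d l i - N i].
Proof.
move=> leNl.
have split_deg i : d l i = N i + (d l i - N i) by rewrite subnKC.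
have [mu [nu [smu_rnu dmu dnu def_l]]] := factorisation split_deg.
by exists mu, nu; split; rewrite // -def_l ?r_comp ?s_comp.
Qed.

Lemma no_sinks_path_above : no_sinks L ->
  forall (v : vtx L) (B : degk k), exists l, s l = v /\ forall i, B i < d l i.
Proof.
(* For k = 0 the hypothesis says nothing, but the condition on degrees is empty. *)
case: k L => [|k'] L' noSinks v B.
  by exists (idm v); split=> [|[]] //; rewrite s_idm.
have [l [sl dl]] : exists l, s l = v /\ has_degree l (fun i => (B i).+1).
  by apply: noSinks => /(_ ord0).
by exists l; split=> // i; rewrite dl.
Qed.

Lemma cofinal_bounded_degree : cofinal L -> finite_vertices L ->
  forall u : vtx L, exists B : degk k, forall w, exists N,
    (forall i, N i <= B i) /\
    forall alpha, r alpha = w -> has_degree alpha N ->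
      exists l, r l = u /\ s l = s alpha.
Proof.
move=> cof [sq in_sq] u.
have [B HB] := exists_bound_seq (cof u) sq.
exists B => w; have [N [PN leNB]] := HB w (in_sq w).
by exists N.
Qed.

End KGraphPaths.

Theorem proposition4p5 (k : nat) (L : kgraph k) :
  row_finite L -> no_sources L ->
  (strongly_connected L -> cofinal L) /\
  (cofinal L -> no_sinks L -> finite_vertices L -> strongly_connected L).
Proof.
move=> _ _; split.
  move=> sc v w; exists (fun _ => 0) => alpha _ _.
  by have [_ [_ [l [rl sl _]]]] := sc v (s alpha); exists l.
move=> cof noSinks finV u v.
have [B HB] := cofinal_bounded_degree cof finV u.
have [beta [sbeta ltBbeta]] := no_sinks_path_above noSinks v B.
have [N [leNB reach_u]] := HB (r beta).
have leNbeta i : N i <= d beta i by apply: leq_trans (leNB i) (ltnW (ltBbeta i)).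
have [mu [nu [smu_rnu rmu snu dmu dnu]]] := factorisation_prefix leNbeta.
have [l0 [rl0 sl0]] := reach_u mu rmu dmu.
have sl0_rnu : s l0 = r nu by rewrite sl0.
exists (d (Defs.comp l0 nu)); split.
  by move=> i; rewrite (d_comp sl0_rnu) dnu; have := leNB i; have := ltBbeta i; lia.
by exists (Defs.comp l0 nu); rewrite r_comp ?s_comp // snu.
Qed.
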